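(* Let $\Gamma\subseteq A$ be $\Bbbk$-algebras, $\sim$ an equivalence relation on $\mathrm{cfs}(\Gamma)$, and suppose $\Gamma$ is a Harish-Chandra block subalgebra of $A$ with respect to $\sim$. Let $V$ be an $A$-module and $v\in V$ with $\mathfrak m_1\cdots\mathfrak m_kv=0$, where $B\in\mathrm{cfs}(\Gamma)/{\sim}$ and $\mathfrak m_1,\dots,\mathfrak m_k\in B$. Then $$Av\subseteq\bigoplus_{C\in\bigcup_{i}\mathrm{Supp}(A/A\mathfrak m_i)}V(C).$$
   Context: $\mathrm{cfs}(\Gamma)$: maximal two-sided ideals $\mathfrak m$ of $\Gamma$ with $\dim\Gamma/\mathfrak m<\infty$. For a class $B$, $\mathcal W(B)=\{\mathfrak m_1\cdots\mathfrak m_k:k\ge0,\mathfrak m_i\in B\}$; for a $\Gamma$-module $V$, $V(B)=\{v:\mathfrak m v=0$ for some $\mathfrak m\in\mathcal W(B)\}$ (these sum directly). $V$ is a block module if $V=\bigoplus_BV(B)$; $\mathrm{Supp}(V)=\{B:V(B)\neq0\}$. $\Gamma$ is a Harish-Chandra block subalgebra of $A$ if the left $A$-module $A/A\mathfrak m$ is a block module over $\Gamma$ for every $B$ and every $\mathfrak m\in\mathcal W(B)$. *)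

From HB Require Import structures.
From mathcomp Require Import all_boot all_order all_algebra.
From Stdlib Require List.
Set Implicit Arguments. Unset Strict Implicit. Unset Printing Implicit Defensive.
Import GRing.Theory.
Local Open Scope ring_scope.

(* Subsets are predicates in Prop. The subalgebra Gamma of A is a subset
   G : A -> Prop closed under the algebra operations; ideals of Gamma are
   subsets of A contained in G. *)

Section Defs.
Variables (k : fieldType) (A : algType k).

Definition is_subalg (G : A -> Prop) : Prop :=
  [/\ G 1, (forall x y, G x -> G y -> G (x - y)),
      (forall (c : k) x, G x -> G (c *: x)) &
      (forall x y, G x -> G y -> G (x * y))].

Definition is_ideal (G I : A -> Prop) : Prop :=
  [/\ (forall x, I x -> G x), I 0,
      (forall x y, I x -> I y -> I (x - y)),
      (forall g x, G g -> I x -> I (g * x)) &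
      (forall g x, G g -> I x -> I (x * g))].

Definition is_maximal_ideal (G I : A -> Prop) : Prop :=
  [/\ is_ideal G I, (exists g, G g /\ ~ I g) &
      (forall J, is_ideal G J -> (forall x, I x -> J x) ->
         (forall x, J x <-> I x) \/ (forall x, J x <-> G x))].

Definition fin_codim (G I : A -> Prop) : Prop :=
  exists s : seq A, (forall i, (i < size s)%N -> G s`_i) /\
    forall x, G x -> exists c : 'I_(size s) -> k,
      I (x - \sum_(i < size s) c i *: s`_i).

Definition cfs (G : A -> Prop) (m : A -> Prop) : Prop :=
  is_maximal_ideal G m /\ fin_codim G m.

Definition equiv_on_cfs (G : A -> Prop) (eqv : (A -> Prop) -> (A -> Prop) -> Prop) :=
  [/\ (forall m, cfs G m -> eqv m m),
      (forall m n, cfs G m -> cfs G n -> eqv m n -> eqv n m) &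
      (forall m n p, cfs G m -> cfs G n -> cfs G p -> eqv m n -> eqv n p -> eqv m p)].

(* B is an element of cfs(Gamma)/~ (an equivalence class) *)
Definition is_block (G : A -> Prop) eqv (B : (A -> Prop) -> Prop) : Prop :=
  exists m0, cfs G m0 /\ forall m, B m <-> (cfs G m /\ eqv m0 m).

(* product of subsets I J : the set of finite sums of products a*b,
   a in I, b in J (the ideal product I J; with I = A it is the left ideal A J) *)
Definition idealMul (I J : A -> Prop) : A -> Prop :=
  fun x => exists (n : nat) (a b : 'I_n -> A),
    (forall i, I (a i)) /\ (forall i, J (b i)) /\ x = \sum_(i < n) a i * b i.

(* m_1 ... m_k as an ideal of Gamma (empty product = Gamma) *)
Definition prodIdeal (G : A -> Prop) (ms : seq (A -> Prop)) : A -> Prop :=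
  foldr idealMul G ms.

Definition Wset (G : A -> Prop) (B : (A -> Prop) -> Prop) (n : A -> Prop) : Prop :=
  exists ms : seq (A -> Prop), (forall m, List.In m ms -> B m) /\ n = prodIdeal G ms.

(* For an A-module M and a submodule N, the notions below concern the
   Gamma-module M/N, phrased on representatives:
   (M/N)(B) = { [v] | n v  is contained in N for some n in W(B) }. *)
Definition QPart (M : lmodType A) (G : A -> Prop) (N : M -> Prop)
  (B : (A -> Prop) -> Prop) (v : M) : Prop :=
  exists n, Wset G B n /\ forall x, n x -> N (x *: v).

Definition BlockModule (M : lmodType A) (G : A -> Prop) eqv (N : M -> Prop) : Prop :=
  forall v : M, exists r : seq (M * ((A -> Prop) -> Prop)),
    (forall p, List.In p r -> is_block G eqv p.2 /\ QPart G N p.2 p.1) /\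
    N (v - \sum_(p <- r) p.1).

Definition Supp (M : lmodType A) (G : A -> Prop) (N : M -> Prop)
  (B : (A -> Prop) -> Prop) : Prop :=
  exists v : M, ~ N v /\ QPart G N B v.

Definition HC_block_subalg (G : A -> Prop) eqv : Prop :=
  forall B, is_block G eqv B -> forall n, Wset G B n ->
    BlockModule (M := A^o) G eqv (idealMul (fun _ => True) n).

End Defs.

(* Write P = m_1 ... m_k. Since A/AP is a block module, a = sum_C a_C mod AP
   with W(C) a_C in AP, so a v = sum_C a_C v with a_C v in V(C), and the a_C
   in AP contribute nothing. It remains to see that (A/AP)(C) <> 0 forces
   C in Supp(A/A m_i) for some i. By induction on k, with P = m_1 P', it
   suffices that (AP'/A m_1 P')(C) = 0 when C is not in Supp(A/A m_1).
   Now AP'/A m_1 P' is spanned by the images of the Gamma-linear maps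
   A/A m_1 -> A/A m_1 P', b |-> b y (y in P'); the nonzero block components
   of A/A m_1 lie in blocks C' <> C, and ideals in W(C') and W(C) are
   comaximal because distinct maximal ideals are. *)

From HB Require Import structures.
From mathcomp Require Import all_boot all_order all_algebra.
From Stdlib Require List.
From Stdlib Require Import Classical FunctionalExtensionality PropExtensionality.
Import GRing.Theory.
Set Implicit Arguments. Unset Strict Implicit.
Local Open Scope ring_scope.

Notation lideal J := (idealMul (fun _ => True) J).

Section IdealProducts.
Variables (k : fieldType) (A : algType k).
Implicit Types (I J : A -> Prop).

Lemma idealMul_ind I J (Q : A -> Prop) :
  Q 0 -> (forall x y, Q x -> Q y -> Q (x + y)) ->
  (forall a b, I a -> J b -> Q (a * b)) -> forall x, idealMul I J x -> Q x.
Proof.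
move=> Q0 QD QM x [n [a [b [Ha [Hb ->]]]]].
by apply: (big_ind Q) => // i _; apply: QM.
Qed.

Lemma idealMul0 I J : idealMul I J 0.
Proof.
by exists 0%N, (fun _ => 0), (fun _ => 0); rewrite big_ord0; split; [case|split; [case|]].
Qed.

Lemma idealMulD I J x y : idealMul I J x -> idealMul I J y -> idealMul I J (x + y).
Proof.
move=> [n1 [a1 [b1 [Ha1 [Hb1 ->]]]]] [n2 [a2 [b2 [Ha2 [Hb2 ->]]]]].
pose glue (f1 : 'I_n1 -> A) (f2 : 'I_n2 -> A) (i : 'I_(n1 + n2)) :=
  match split i with inl i1 => f1 i1 | inr i2 => f2 i2 end.
exists (n1 + n2)%N, (glue a1 a2), (glue b1 b2); split; [|split].
- by move=> i; rewrite /glue; case: (split i).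
- by move=> i; rewrite /glue; case: (split i).
rewrite big_split_ord /glue; congr (_ + _); apply: eq_bigr => i _.
- by rewrite (unsplitK (inl i)).
- by rewrite (unsplitK (inr i)).
Qed.

Lemma mem_idealMul I J a b : I a -> J b -> idealMul I J (a * b).
Proof.
by move=> Ha Hb; exists 1%N, (fun _ => a), (fun _ => b); rewrite big_ord1.
Qed.

Lemma idealMulS I J I' J' : (forall x, I x -> I' x) -> (forall x, J x -> J' x) ->
  forall x, idealMul I J x -> idealMul I' J' x.
Proof.
move=> HI HJ; apply: idealMul_ind; [exact: idealMul0|exact: idealMulD|].
by move=> a b /HI Ha /HJ Hb; apply: mem_idealMul.
Qed.

Lemma lidealMl J b : forall x, lideal J x -> lideal J (b * x).
Proof.
apply: (idealMul_ind (Q := fun x => lideal J (b * x))).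
- by rewrite mulr0; apply: idealMul0.
- by move=> x y; rewrite mulrDr; apply: idealMulD.
- by move=> a c _ Hc; rewrite mulrA; apply: mem_idealMul.
Qed.

End IdealProducts.

Section Ideals.
Variables (k : fieldType) (A : algType k) (G : A -> Prop).
Hypothesis HG : is_subalg G.
Implicit Types (I J K m : A -> Prop).

Lemma subalg1 : G 1. Proof. by case: HG. Qed.
Lemma subalgB x y : G x -> G y -> G (x - y). Proof. by case: HG => _ + _ _; apply. Qed.
Lemma subalgM x y : G x -> G y -> G (x * y). Proof. by case: HG => _ _ _; apply. Qed.
Lemma subalg0 : G 0. Proof. by rewrite -(subrr 1); apply: subalgB; apply: subalg1. Qed.
Lemma subalgN x : G x -> G (- x). Proof. by rewrite -sub0r; apply: subalgB subalg0. Qed.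
Lemma subalgD x y : G x -> G y -> G (x + y).
Proof. by move=> Gx /subalgN Gy; rewrite -(opprK y); apply: subalgB. Qed.

Section Ideal.
Variable I : A -> Prop.
Hypothesis HI : is_ideal G I.

Lemma ideal_sub x : I x -> G x. Proof. by case: HI => + _ _ _ _; apply. Qed.
Lemma ideal0 : I 0. Proof. by case: HI. Qed.
Lemma idealB x y : I x -> I y -> I (x - y). Proof. by case: HI => _ _ + _ _; apply. Qed.
Lemma idealMl g x : G g -> I x -> I (g * x). Proof. by case: HI => _ _ _ + _; apply. Qed.
Lemma idealMr g x : G g -> I x -> I (x * g). Proof. by case: HI => _ _ _ _; apply. Qed.
Lemma idealN x : I x -> I (- x). Proof. by rewrite -sub0r; apply: idealB ideal0. Qed.
Lemma idealD x y : I x -> I y -> I (x + y).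
Proof. by move=> Ix /idealN Iy; rewrite -(opprK y); apply: idealB. Qed.

End Ideal.

Lemma ideal_whole : is_ideal G G.
Proof.
by split; [|exact: subalg0|exact: subalgB|exact: subalgM|move=> g x Gg /subalgM]; auto.
Qed.

Lemma ideal_idealMul I J : is_ideal G I -> is_ideal G J -> is_ideal G (idealMul I J).
Proof.
move=> HI HJ.
have IJMl g : G g -> forall y, idealMul I J y -> idealMul I J (g * y).
  move=> Gg; apply: (idealMul_ind (Q := fun y => idealMul I J (g * y))).
  - by rewrite mulr0; apply: idealMul0.
  - by move=> y1 y2 H1 H2; rewrite mulrDr; apply: idealMulD.
  - by move=> a b Ha Hb; rewrite mulrA; apply: mem_idealMul => //; apply: idealMl.
split=> [||x y Hx Hy||g x Gg].
- apply: idealMul_ind; [exact: subalg0|exact: subalgD|].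
  by move=> a b /(ideal_sub HI) Ga /(ideal_sub HJ) Gb; apply: subalgM.
- exact: idealMul0.
- by rewrite -mulN1r; apply: idealMulD Hx _; apply: IJMl Hy; apply/subalgN/subalg1.
- by move=> g x /IJMl; apply.
- move: x; apply: (idealMul_ind (Q := fun y => idealMul I J (y * g))).
  + by rewrite mul0r; apply: idealMul0.
  + by move=> y1 y2 H1 H2; rewrite mulrDl; apply: idealMulD.
  + by move=> a b Ha Hb; rewrite -mulrA; apply: mem_idealMul => //; apply: idealMr.
Qed.

Lemma ideal_prodIdeal ms : (forall m, List.In m ms -> is_ideal G m) ->
  is_ideal G (prodIdeal G ms).
Proof.
elim: ms => [|m ms IH] Hms /=; first exact: ideal_whole.
by apply: ideal_idealMul; [apply: Hms; left|apply: IH => m' Hm'; apply: Hms; right].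
Qed.

Lemma idealMul_subr I J : is_ideal G I -> is_ideal G J ->
  forall x, idealMul I J x -> J x.
Proof.
move=> HI HJ; apply: idealMul_ind; [exact: ideal0|exact: idealD|].
by move=> a b /(ideal_sub HI) Ga; apply: idealMl.
Qed.

Lemma idealMulG m : is_ideal G m -> idealMul m G = m.
Proof.
move=> Hm; apply: functional_extensionality => x; apply: propositional_extensionality.
split; last by move=> Hx; rewrite -(mulr1 x); apply: mem_idealMul => //; apply: subalg1.
apply: idealMul_ind x; [exact: ideal0|exact: idealD|].
by move=> a b Ha Gb; apply: idealMr.
Qed.

Lemma lideal_whole x : lideal G x.
Proof. by rewrite -(mulr1 x); apply: mem_idealMul => //; apply: subalg1. Qed.

Definition idealAdd I J x := exists i j, [/\ I i, J j & x = i + j].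

Lemma ideal_idealAdd I J : is_ideal G I -> is_ideal G J -> is_ideal G (idealAdd I J).
Proof.
move=> HI HJ; split=> [x [i [j [Hi Hj ->]]]||x y|g x Gg|g x Gg].
- by apply: subalgD; [apply: (ideal_sub HI)|apply: (ideal_sub HJ)].
- by exists 0, 0; rewrite addr0; split=> //; apply: ideal0.
- move=> [i [j [Hi Hj ->]]] [i' [j' [Hi' Hj' ->]]]; exists (i - i'), (j - j').
  by rewrite opprD addrACA; split=> //; apply: idealB.
- move=> [i [j [Hi Hj ->]]]; exists (g * i), (g * j).
  by rewrite mulrDr; split=> //; apply: idealMl.
- move=> [i [j [Hi Hj ->]]]; exists (i * g), (j * g).
  by rewrite mulrDl; split=> //; apply: idealMr.
Qed.

Definition comaximal I J := exists i j, [/\ I i, J j & i + j = 1].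

Lemma comaximalC I J : comaximal I J -> comaximal J I.
Proof. by move=> [i [j [Hi Hj E]]]; exists j, i; rewrite addrC. Qed.

Lemma comaximal_idealMul I J K : is_ideal G I -> is_ideal G J -> is_ideal G K ->
  comaximal I J -> comaximal I K -> comaximal I (idealMul J K).
Proof.
move=> HI HJ HK [i [j [Hi Hj E1]]] [i' [c [Hi' Hc E2]]].
have [Gj Gc] := (ideal_sub HJ Hj, ideal_sub HK Hc).
exists (i * i' + i * c + j * i'), (j * c); split.
- have Gi' := ideal_sub HI Hi'.
  by apply: (idealD HI); [apply: (idealD HI); apply: (idealMr HI)|apply: (idealMl HI)].
- exact: mem_idealMul.
- have -> : 1 = (i + j) * (i' + c) by rewrite E1 E2 mulr1.
  by rewrite mulrDl !mulrDr addrA.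
Qed.

Lemma comaximal_prodIdeal I ms : is_ideal G I ->
  (forall m, List.In m ms -> is_ideal G m /\ comaximal I m) ->
  comaximal I (prodIdeal G ms).
Proof.
move=> HI; elim: ms => [|m ms IH] Hms /=.
  by exists 0, 1; rewrite add0r; split=> //; [apply: ideal0|apply: subalg1].
have [Hm Im] := Hms m (or_introl erefl).
have Hms' m' : List.In m' ms -> is_ideal G m' /\ comaximal I m'.
  by move=> H; apply: Hms; right.
apply: comaximal_idealMul => //; last exact: IH.
by apply: ideal_prodIdeal => m' /Hms' [].
Qed.

Lemma maximal_comaximal m m' : is_maximal_ideal G m -> is_maximal_ideal G m' ->
  m <> m' -> comaximal m m'.
Proof.
move=> [Im [g [Gg Ng]] maxm] [Im' _ maxm'] neq.
have mJ x : m x -> idealAdd m m' x.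
  by move=> Hx; exists x, 0; rewrite addr0; split=> //; apply: ideal0.
case: (maxm _ (ideal_idealAdd Im Im') mJ) => [Jm|JG]; last first.
  by have [i [j [Hi Hj E]]] := (JG 1).2 subalg1; exists i, j.
have m'm x : m' x -> m x.
  by move=> Hx; apply/Jm; exists 0, x; rewrite add0r; split=> //; apply: ideal0.
case: (maxm' _ Im m'm) => [mm'|mG]; last by case: Ng; apply/mG.
case: neq; apply: functional_extensionality => x.
exact: propositional_extensionality.
Qed.

End Ideals.

Section Blocks.
Variables (k : fieldType) (A : algType k) (G : A -> Prop)
  (eqv : (A -> Prop) -> (A -> Prop) -> Prop).
Hypothesis HG : is_subalg G.
Hypothesis Heqv : equiv_on_cfs G eqv.
Implicit Types (m n : A -> Prop) (C : (A -> Prop) -> Prop).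

Lemma block_cfs C m : is_block G eqv C -> C m -> cfs G m.
Proof. by move=> [m0 [_ HC]] /HC []. Qed.

Lemma block_ideal C m : is_block G eqv C -> C m -> is_ideal G m.
Proof. by move=> HC /(block_cfs HC) [[]]. Qed.

Lemma Wset_ideal C n : is_block G eqv C -> Wset G C n -> is_ideal G n.
Proof.
by move=> HC [ms [Hms ->]]; apply: ideal_prodIdeal => // m /Hms /(block_ideal HC).
Qed.

Lemma Wset1 C m : is_block G eqv C -> C m -> Wset G C m.
Proof.
move=> HC Hm; exists [:: m]; split; first by move=> m' [<-|[]].
by rewrite /= (idealMulG HG (block_ideal HC Hm)).
Qed.

Lemma block_eq C C' m : is_block G eqv C -> is_block G eqv C' -> C m -> C' m -> C = C'.
Proof.
move=> [m0 [cm0 HC]] [m0' [cm0' HC']] /HC [cm e0] /HC' [_ e0'].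
have [_ sym trans] := Heqv.
have e00' : eqv m0 m0' by apply: trans e0 (sym _ _ _ _ e0') => //.
apply: functional_extensionality => X; apply: propositional_extensionality.
rewrite HC HC'; split=> -[cX eX]; split=> //.
- exact: trans (sym _ _ _ _ e00') eX.
- exact: trans e00' eX.
Qed.

Lemma comaximal_blocks C C' m m' : is_block G eqv C -> is_block G eqv C' -> C <> C' ->
  C m -> C' m' -> comaximal m m'.
Proof.
move=> HC HC' neq Hm Hm'.
apply: (maximal_comaximal HG); [exact: (block_cfs HC Hm).1|exact: (block_cfs HC' Hm').1|].
by move=> Em; case: neq; apply: (block_eq HC HC' Hm); rewrite Em.
Qed.

Lemma comaximal_Wset C C' n n' : is_block G eqv C -> is_block G eqv C' -> C <> C' ->
  Wset G C n -> Wset G C' n' -> comaximal n n'.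
Proof.
move=> HC HC' neq Wn Wn'; have [In In'] := (Wset_ideal HC Wn, Wset_ideal HC' Wn').
case: Wn Wn' => [ms [Hms ->]] [ms' [Hms' En']].
apply: comaximalC; apply: (comaximal_prodIdeal HG In') => m /Hms Hm.
have Im := block_ideal HC Hm; split=> //.
apply: comaximalC; rewrite En'; apply: (comaximal_prodIdeal HG Im) => m' /Hms' Hm'.
by split; [apply: block_ideal HC' Hm'|apply: comaximal_blocks HC HC' neq Hm Hm'].
Qed.

End Blocks.

Section Negligible.
Variables (k : fieldType) (A : algType k) (G nc N : A -> Prop).
Hypothesis HG : is_subalg G.
Hypothesis Inc : is_ideal G nc.
Hypothesis N0 : N 0.
Hypothesis ND : forall x y, N x -> N y -> N (x + y).
Hypothesis NMl : forall g x, G g -> N x -> N (g * x).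

(* z is killed modulo N by j Gamma for some j in 1 + nc. Such a z lies in N
   as soon as nc z does, and unlike that implication this property is closed
   under sums. *)
Definition negligible z :=
  exists i j, [/\ nc i, G j, i + j = 1 & forall g, G g -> N (j * g * z)].

Lemma negligible_mem z : N z -> negligible z.
Proof.
move=> Nz; exists 0, 1; rewrite add0r; split=> //.
- exact: ideal0 Inc.
- exact: subalg1.
- by move=> g Gg; rewrite mul1r; apply: NMl.
Qed.

Lemma negligibleD z1 z2 : negligible z1 -> negligible z2 -> negligible (z1 + z2).
Proof.
move=> [i1 [j1 [Hi1 Gj1 E1 H1]]] [i2 [j2 [Hi2 Gj2 E2 H2]]].
exists (i1 + j1 * i2), (j1 * j2); split.
- by apply: (idealD Inc) => //; apply: (idealMl Inc).
- exact: subalgM.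
- by rewrite -addrA -mulrDr E2 mulr1.
- move=> g Gg; rewrite mulrDr -!(mulrA j1); apply: ND.
  + by rewrite mulrA; apply: H1; apply: subalgM.
  + by apply: NMl => //; apply: H2.
Qed.

Lemma negligible_sum (T : Type) (r : seq T) (F : T -> A) :
  (forall q, List.In q r -> negligible (F q)) -> negligible (\sum_(q <- r) F q).
Proof.
elim: r => [|q r IH] Hr; first by rewrite big_nil; apply: negligible_mem.
rewrite big_cons; apply: negligibleD; first by apply: Hr; left.
by apply: IH => q' Hq'; apply: Hr; right.
Qed.

Lemma negligible_eqmod z w : N (z - w) -> negligible w -> negligible z.
Proof.
move=> Nzw [i [j [Hi Gj E H]]]; exists i, j; split=> // g Gg.
rewrite -(subrK w z) mulrDr; apply: ND; last exact: H.
by apply: NMl Nzw; apply: subalgM.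
Qed.

Lemma negligible_comaximal n z : is_ideal G n -> comaximal nc n ->
  (forall x, n x -> N (x * z)) -> negligible z.
Proof.
move=> In [i [j [Hi Hj E]]] Hz; exists i, j; split=> //; first exact: (ideal_sub In Hj).
by move=> g Gg; apply: Hz; apply: (idealMr In).
Qed.

Lemma negligible_torsion z : negligible z -> (forall y, nc y -> N (y * z)) -> N z.
Proof.
move=> [i [j [Hi Gj E H]]] Hz.
rewrite -(mul1r z) -E mulrDl; apply: ND; first exact: Hz.
by rewrite -(mulr1 j); apply: H; apply: subalg1.
Qed.

End Negligible.

Lemma lideal_mulr (k : fieldType) (A : algType k) (m P : A -> Prop) c y :
  lideal m c -> P y -> lideal (idealMul m P) (c * y).
Proof.
move=> Hc Py; move: c Hc.
apply: (idealMul_ind (Q := fun c => lideal (idealMul m P) (c * y))).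
- by rewrite mul0r; apply: idealMul0.
- by move=> c1 c2 H1 H2; rewrite mulrDl; apply: idealMulD.
- by move=> a mu _ Hmu; rewrite -mulrA; apply: mem_idealMul => //; apply: mem_idealMul.
Qed.

Section Torsion.
Variables (k : fieldType) (A : algType k) (G : A -> Prop)
  (eqv : (A -> Prop) -> (A -> Prop) -> Prop).
Hypothesis HG : is_subalg G.
Hypothesis Heqv : equiv_on_cfs G eqv.
Hypothesis HHC : HC_block_subalg G eqv.

Lemma lideal_mul_torsion B C m P nc x :
  is_block G eqv B -> B m -> is_ideal G P -> is_block G eqv C -> Wset G C nc ->
  ~ Supp (M := A^o) G (lideal m) C -> lideal P x ->
  (forall y, nc y -> lideal (idealMul m P) (y * x)) -> lideal (idealMul m P) x.
Proof.
move=> HB Hm IP HC Wnc nSupp HxP Hnc.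
set N := lideal (idealMul m P).
have Inc := Wset_ideal HG HC Wnc.
have N0 : N 0 := idealMul0 _ _.
have ND : forall z1 z2, N z1 -> N z2 -> N (z1 + z2) by move=> ? ?; apply: idealMulD.
have NMl : forall g z, G g -> N z -> N (g * z) by move=> g z _; apply: lidealMl.
have negligible_mulr b y : P y -> negligible G nc N (b * y).
  move=> Py; have [r [Hr Hb]] := HHC HB (Wset1 HG HB Hm) b.
  have Nr : N (b * y - \sum_(q <- r) q.1 * y).
    by rewrite -mulr_suml -mulrBl; apply: lideal_mulr.
  apply: (negligible_eqmod HG ND NMl Nr).
  apply: negligible_sum => // q /Hr [Hq2 [n [Wn Hn]]].
  have [Hq1|nHq1] := classic (lideal m q.1).
    by apply: negligible_mem => //; apply: lideal_mulr.
  have neq : C <> q.2.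
    by move=> EC; apply: nSupp; exists q.1; split=> //; rewrite EC; exists n.
  apply: (negligible_comaximal (Wset_ideal HG Hq2 Wn)).
    exact: (comaximal_Wset HG Heqv HC Hq2 neq Wnc Wn).
  by move=> x0 Hx0; rewrite mulrA; apply: lideal_mulr => //; apply: Hn.
have negligible_lideal : forall z, lideal P z -> negligible G nc N z.
  apply: (idealMul_ind (Q := negligible G nc N)).
  - exact: negligible_mem.
  - by move=> ? ?; apply: negligibleD.
  - by move=> b y _; apply: negligible_mulr.
by apply: (negligible_torsion (G := G)) Hnc => //; apply: negligible_lideal.
Qed.

Lemma lideal_prod_torsion B C nc ms x :
  is_block G eqv B -> (forall m, List.In m ms -> B m) -> is_block G eqv C -> Wset G C nc ->
  (forall m, List.In m ms -> ~ Supp (M := A^o) G (lideal m) C) ->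
  (forall y, nc y -> lideal (prodIdeal G ms) (y * x)) -> lideal (prodIdeal G ms) x.
Proof.
move=> HB + HC Wnc; elim: ms => [|m ms IH] Hms nSupp Hnc /=; first exact: lideal_whole.
have Hms' m' : List.In m' ms -> B m' by move=> Hm'; apply: Hms; right.
have IP : is_ideal G (prodIdeal G ms).
  by apply: ideal_prodIdeal => // m' /Hms' /(block_ideal HB).
apply: (lideal_mul_torsion HB (Hms m (or_introl erefl)) IP HC Wnc) => //.
  by apply: nSupp; left.
apply: IH => // [m' Hm'|y Hy]; first by apply: nSupp; right.
apply: idealMulS (Hnc y Hy) => //; apply: (idealMul_subr _ IP).
exact: block_ideal HB (Hms m (or_introl erefl)).
Qed.

Lemma Supp_prodIdeal B C nc ms x :
  is_block G eqv B -> (forall m, List.In m ms -> B m) -> is_block G eqv C -> Wset G C nc ->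
  ~ lideal (prodIdeal G ms) x -> (forall y, nc y -> lideal (prodIdeal G ms) (y * x)) ->
  exists m, List.In m ms /\ Supp (M := A^o) G (lideal m) C.
Proof.
move=> HB Hms HC Wnc nx Hnc; apply: NNPP => nSupp; apply: nx.
apply: (lideal_prod_torsion HB Hms HC Wnc) => // m Hm Sm.
by apply: nSupp; exists m.
Qed.

End Torsion.

Section Image.
Variables (k : fieldType) (A : algType k) (G : A -> Prop)
  (eqv : (A -> Prop) -> (A -> Prop) -> Prop).
Hypothesis HG : is_subalg G.
Hypothesis Heqv : equiv_on_cfs G eqv.
Hypothesis HHC : HC_block_subalg G eqv.
Variables (V : lmodType A) (v : V) (B : (A -> Prop) -> Prop) (ms : seq (A -> Prop)).
Hypothesis HB : is_block G eqv B.
Hypothesis Hms : forall m, List.In m ms -> B m.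
Hypothesis Hv : forall x, prodIdeal G ms x -> x *: v = 0.

Definition supported_piece (p : V * ((A -> Prop) -> Prop)) :=
  [/\ is_block G eqv p.2, QPart G (fun w : V => w = 0) p.2 p.1 &
      exists m, List.In m ms /\ Supp (M := A^o) G (lideal m) p.2].

Lemma lideal_prod_annihilates z : lideal (prodIdeal G ms) z -> z *: v = 0.
Proof.
move: z; apply: (idealMul_ind (Q := fun z => z *: v = 0)).
- by rewrite scale0r.
- by move=> x y Hx Hy; rewrite scalerDl Hx Hy addr0.
- by move=> b y _ Hy; rewrite -scalerA Hv // scaler0.
Qed.

Lemma supported_pieceZ (q : A * ((A -> Prop) -> Prop)) :
  is_block G eqv q.2 -> QPart (M := A^o) G (lideal (prodIdeal G ms)) q.2 q.1 ->
  ~ lideal (prodIdeal G ms) q.1 -> supported_piece (q.1 *: v, q.2).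
Proof.
move=> Hq2 [n [Wn Hn]] nq1; split=> //.
  by exists n; split=> // x Hx; rewrite /= scalerA; apply: lideal_prod_annihilates; apply: Hn.
exact: (Supp_prodIdeal HG Heqv HHC HB Hms Hq2 Wn nq1).
Qed.

Lemma scale_block_decomposition (L : seq (A * ((A -> Prop) -> Prop))) :
  (forall q, List.In q L ->
     is_block G eqv q.2 /\ QPart (M := A^o) G (lideal (prodIdeal G ms)) q.2 q.1) ->
  exists r, (\sum_(q <- L) q.1) *: v = \sum_(p <- r) p.1 /\
            forall p, List.In p r -> supported_piece p.
Proof.
elim: L => [|q L IH] HL; first by exists [::]; rewrite !big_nil scale0r.
have [r [Er Hr]] := IH (fun q' Hq' => HL q' (or_intror Hq')).
have [Hq2 Qq] := HL q (or_introl erefl).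
have [Pq1|nPq1] := classic (lideal (prodIdeal G ms) q.1).
  by exists r; rewrite big_cons scalerDl lideal_prod_annihilates // add0r.
exists ((q.1 *: v, q.2) :: r); rewrite !big_cons scalerDl Er; split=> // p [<-|/Hr //].
exact: supported_pieceZ.
Qed.

End Image.

Theorem mainTheorem10 (k : fieldType) (A : algType k) (G : A -> Prop)
  (eqv : (A -> Prop) -> (A -> Prop) -> Prop) :
  is_subalg G -> equiv_on_cfs G eqv -> HC_block_subalg G eqv ->
  forall (V : lmodType A) (v : V) (B : (A -> Prop) -> Prop) (ms : seq (A -> Prop)),
    is_block G eqv B -> (forall m, List.In m ms -> B m) ->
    (forall x, prodIdeal G ms x -> x *: v = 0) ->
    forall a : A, exists r : seq (V * ((A -> Prop) -> Prop)),
      a *: v = \sum_(p <- r) p.1 /\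
      forall p, List.In p r ->
        [/\ is_block G eqv p.2,
            QPart G (fun w : V => w = 0) p.2 p.1 &
            exists m, List.In m ms /\
              Supp (M := A^o) G (idealMul (fun _ => True) m) p.2].
Proof.
move=> HG Heqv HHC V v B ms HB Hms Hv a.
have WB : Wset G B (prodIdeal G ms) by exists ms.
have [L [HL Ha]] := HHC B HB _ WB a.
have [r [Er Hr]] := scale_block_decomposition HG Heqv HHC HB Hms Hv HL.
exists r; split=> //.
by rewrite -(subrK (\sum_(q <- L) q.1 : A) a) scalerDl (lideal_prod_annihilates Hv Ha) add0r.
Qed.
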